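(* Assume the geometric setup and uniform-amplitude model in the context, with $D_{\rm m}<D_{\rm b}$, $r>d_{\rm Fn}$, and $|\sin(\theta-\psi)|\ge c$ for a constant $c>0$. Let $D_{\rm m}^{\rm eff}=D_{\rm m}|\sin(\theta-\psi)|$. Then $$\|\mathbf{J}_\psi\|_{\mathsf F}^2=\frac{N_{\rm b}N_{\rm m}(D_{\rm m}^{\rm eff})^2}{48r^2}\Big(1+\frac{2}{N_{\rm m}-1}\Big)\big(1+\mathcal{O}(N_{\rm b}^{-1})\big),$$ and consequently, for any full-row-rank $\mathbf{Q}\in\mathbb{C}^{N_{\rm rf}\times N_{\rm b}}$ and $P_{\rm m},\sigma_{\rm o}^2>0$, the average Fisher information $\bar F_\psi=\frac{2P_{\rm m}}{\sigma_{\rm o}^2N_{\rm m}}\|\mathbf{P}_{\mathbf{Q}}\mathbf{J}_\psi\|_{\mathsf F}^2$ satisfies $$\bar F_\psi\le\frac{2P_{\rm m}}{\sigma_{\rm o}^2N_{\rm m}}\|\mathbf{J}_\psi\|_{\mathsf F}^2=\frac{P_{\rm m}N_{\rm b}(D_{\rm m}^{\rm eff})^2}{24\sigma_{\rm o}^2r^2}\Big(1+\frac{2}{N_{\rm m}-1}\Big)\big(1+\mathcal{O}(N_{\rm b}^{-1})\big).$$ Here $\mathcal{O}(N_{\rm b}^{-1})$ denotes a quantity bounded in absolute value by $C/N_{\rm b}$ with $C$ depending only on $c$, uniformly over $\lambda$, $N_{\rm m}$ and poses satisfying the hypotheses.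
   Context: Geometric setup: wavelength $\lambda>0$; BS and MS uniform linear arrays with odd numbers of antennas $N_{\rm b}=2\bar N_{\rm b}+1\ge3$ and $N_{\rm m}=2\bar N_{\rm m}+1\ge3$, spacings $d_{\rm b}=d_{\rm m}=\lambda/2$, apertures $D_{\rm b}=(N_{\rm b}-1)d_{\rm b}$, $D_{\rm m}=(N_{\rm m}-1)d_{\rm m}$. BS antenna $n_{\rm b}\in\{-\bar N_{\rm b},\dots,\bar N_{\rm b}\}$ sits at $(0,n_{\rm b}d_{\rm b})$; for MS pose $(x,y,\psi)$, MS antenna $n_{\rm m}\in\{-\bar N_{\rm m},\dots,\bar N_{\rm m}\}$ sits at $(x+n_{\rm m}d_{\rm m}\cos\psi,\;y+n_{\rm m}d_{\rm m}\sin\psi)$, and $r_{n_{\rm b},n_{\rm m}}=\sqrt{(x+n_{\rm m}d_{\rm m}\cos\psi)^2+(y+n_{\rm m}d_{\rm m}\sin\psi-n_{\rm b}d_{\rm b})^2}$. Let $r=\sqrt{x^2+y^2}>0$ and $\theta$ be the polar angle with $x=r\cos\theta$, $y=r\sin\theta$. Fresnel distance: $d_{\rm Fn}=0.62\sqrt{D_{\rm b}^3/\lambda}$. Uniform-amplitude channel: $\mathbf{H}\in\mathbb{C}^{N_{\rm b}\times N_{\rm m}}$ with rows indexed by $n_{\rm b}$ and columns by $n_{\rm m}$ (both increasing), entries $h_{n_{\rm b},n_{\rm m}}=\frac{\lambda}{4\pi r}e^{-{\rm j}\frac{2\pi}{\lambda}r_{n_{\rm b},n_{\rm m}}}$. Let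 $\eta=-\big(\frac1r+{\rm j}\frac{2\pi}{\lambda}\big)$. The channel derivatives under the uniform-amplitude approximation are the matrices with entries $[\mathbf{J}_x]_{n_{\rm b},n_{\rm m}}=\eta\frac{x+n_{\rm m}d_{\rm m}\cos\psi}{r}h_{n_{\rm b},n_{\rm m}}$, $[\mathbf{J}_y]_{n_{\rm b},n_{\rm m}}=\eta\frac{y+n_{\rm m}d_{\rm m}\sin\psi-n_{\rm b}d_{\rm b}}{r}h_{n_{\rm b},n_{\rm m}}$, and $\mathbf{J}_\psi=-d_{\rm m}\sin\psi\,\mathbf{J}_x\mathbf{D}_{N_{\rm m}}+d_{\rm m}\cos\psi\,\mathbf{J}_y\mathbf{D}_{N_{\rm m}}$, with $\mathbf{D}_{N_{\rm m}}=\mathrm{diag}(-\bar N_{\rm m},\dots,0,\dots,\bar N_{\rm m})$. $\mathbf{P}_{\mathbf{Q}}=\mathbf{Q}^{\mathsf H}(\mathbf{Q}\mathbf{Q}^{\mathsf H})^{-1}\mathbf{Q}$; $\|\cdot\|_{\mathsf F}$ is the Frobenius norm. *)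

From mathcomp Require Import all_boot all_algebra.
From mathcomp Require Import all_classical all_reals all_analysis.
From mathcomp Require Import complex.
Set Implicit Arguments. Unset Strict Implicit. Unset Printing Implicit Defensive.
Import GRing.Theory Num.Theory.
Local Open Scope ring_scope.
Local Open Scope complex_scope.

Section NearField.
Variable R : realType.

(* number of antennas of a ULA with half-count Nbar : N = 2 Nbar + 1 *)
Definition nant (Nbar : nat) : nat := (2 * Nbar + 1)%N.

(* antenna index n in {-Nbar..Nbar} attached to the matrix index i (increasing) *)
Definition aidx (Nbar : nat) (i : 'I_(nant Nbar)) : R := (i : nat)%:R - Nbar%:R.

Definition spacing (lam : R) : R := lam / 2.
Definition aperture (Nbar : nat) (lam : R) : R :=
  ((nant Nbar)%:R - 1) * spacing lam.

Definition fresnel (lam Db : R) : R := (62 / 100) * Num.sqrt (Db ^+ 3 / lam).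

Definition rpol (x y : R) : R := Num.sqrt (x ^+ 2 + y ^+ 2).

Definition rdist (lam x y psi nb nm : R) : R :=
  Num.sqrt ((x + nm * spacing lam * cos psi) ^+ 2
            + (y + nm * spacing lam * sin psi - nb * spacing lam) ^+ 2).

Definition expj (phi : R) : R[i] := cos phi +i* sin phi.

Definition chanH (lam : R) (Nbb Nmb : nat) (x y psi : R)
  : 'M[R[i]]_(nant Nbb, nant Nmb) :=
  \matrix_(i, j) ((lam / (4 * pi * rpol x y))%:C
      * expj (- (2 * pi / lam) * rdist lam x y psi (aidx i) (aidx j))).

Definition eta (lam r : R) : R[i] := - ((1 / r)%:C + 'i * (2 * pi / lam)%:C).

Definition Jx (lam : R) (Nbb Nmb : nat) (x y psi : R)
  : 'M[R[i]]_(nant Nbb, nant Nmb) :=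
  \matrix_(i, j) (eta lam (rpol x y)
      * ((x + aidx j * spacing lam * cos psi) / rpol x y)%:C
      * chanH lam Nbb Nmb x y psi i j).

Definition Jy (lam : R) (Nbb Nmb : nat) (x y psi : R)
  : 'M[R[i]]_(nant Nbb, nant Nmb) :=
  \matrix_(i, j) (eta lam (rpol x y)
      * ((y + aidx j * spacing lam * sin psi - aidx i * spacing lam) / rpol x y)%:C
      * chanH lam Nbb Nmb x y psi i j).

Definition Dmat (Nmb : nat) : 'M[R[i]]_(nant Nmb) :=
  diag_mx (\row_j (aidx j)%:C).

Definition Jpsi (lam : R) (Nbb Nmb : nat) (x y psi : R)
  : 'M[R[i]]_(nant Nbb, nant Nmb) :=
  (- spacing lam * sin psi)%:C *: (Jx lam Nbb Nmb x y psi *m Dmat Nmb)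
  + (spacing lam * cos psi)%:C *: (Jy lam Nbb Nmb x y psi *m Dmat Nmb).

Definition frob2 (m n : nat) (A : 'M[R[i]]_(m, n)) : R :=
  \sum_(i < m) \sum_(j < n) (@complex.Re R (A i j) ^+ 2 + @complex.Im R (A i j) ^+ 2).

Definition ctrmx (m n : nat) (A : 'M[R[i]]_(m, n)) : 'M[R[i]]_(n, m) :=
  (map_mx conjc A)^T.

Definition projQ (m n : nat) (Q : 'M[R[i]]_(m, n)) : 'M[R[i]]_n :=
  ctrmx Q *m invmx (Q *m ctrmx Q) *m Q.

Definition Fbar (Pm s2 : R) (Nrf Nb Nm : nat) (Q : 'M[R[i]]_(Nrf, Nb))
  (J : 'M[R[i]]_(Nb, Nm)) : R :=
  2 * Pm / (s2 * Nm%:R) * frob2 (projQ Q *m J).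

End NearField.

(* Entry (n_b, n_m) of [J_psi] equals [eta h n_m d (r sin(theta - psi) -
   n_b d cos psi) / r], and all entries of [H] have the same modulus, so
   [||J_psi||_F^2] factors into a sum over the BS indices times a sum over the
   MS indices.  Both are power sums over the symmetric range [-Nbar..Nbar]
   (the odd moment vanishes), which gives the leading term times
   [(1 + A)(1 + B)] exactly.  The Fresnel condition [r > d_Fn] makes
   [r^2 >~ N_b^3 lambda^2], whence [A, B = O(1/N_b)] once [|sin(theta - psi)|]
   is bounded below.  The Fisher bound holds because [P_Q] is an orthogonal
   projection and so cannot increase the Frobenius norm. *)

From mathcomp Require Import all_boot all_order all_algebra.
From mathcomp Require Import all_classical all_reals all_analysis.
From mathcomp Require Import complex.
From mathcomp Require Import ring lra.
Set Implicit Arguments. Unset Strict Implicit. Unset Printing Implicit Defensive.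
Import Order.TTheory GRing.Theory Num.Theory.
Local Open Scope ring_scope.
Local Open Scope complex_scope.

Section Frobenius.
Variable R : realType.
Implicit Types z : R[i].

Definition sqnormc z : R := complex.Re z ^+ 2 + complex.Im z ^+ 2.

Lemma mulJc z : z^* * z = (sqnormc z)%:C.
Proof.
case: z => a b; rewrite /sqnormc /=; apply/eqP; rewrite eq_complex /=.
by apply/andP; split; apply/eqP; ring.
Qed.

Lemma sqnormc_ge0 z : 0 <= sqnormc z.
Proof. by rewrite /sqnormc addr_ge0 ?sqr_ge0. Qed.

Lemma sqnormc_eq0 z : (sqnormc z == 0) = (z == 0).
Proof. by case: z => a b; rewrite /sqnormc paddr_eq0 ?sqr_ge0 // !sqrf_eq0 eq_complex. Qed.

Lemma sqnormcM z w : sqnormc (z * w) = sqnormc z * sqnormc w.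
Proof. by case: z => a b; case: w => c d; rewrite /sqnormc /=; ring. Qed.

Lemma sqnormc_real (t : R) : sqnormc t%:C = t ^+ 2.
Proof. by rewrite /sqnormc /= expr0n addr0. Qed.

Lemma frob2_ge0 m n (A : 'M[R[i]]_(m, n)) : 0 <= frob2 A.
Proof. by apply: sumr_ge0 => i _; apply: sumr_ge0 => j _; apply: sqnormc_ge0. Qed.

Lemma frob2_eq0 m n (A : 'M[R[i]]_(m, n)) : frob2 A = 0 -> A = 0.
Proof.
move=> /eqP; rewrite psumr_eq0 => [/allP A0|i _]; last first.
  by apply: sumr_ge0 => j _; apply: sqnormc_ge0.
apply/matrixP => i j; apply/eqP; rewrite mxE -sqnormc_eq0.
move/(_ i (mem_index_enum _)): A0; rewrite /= psumr_eq0 => [/allP|k _]; last exact: sqnormc_ge0.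
by move/(_ j (mem_index_enum _)).
Qed.

Lemma ctrmxE m n (A : 'M[R[i]]_(m, n)) i j : ctrmx A i j = (A j i)^*.
Proof. by rewrite !mxE. Qed.

Lemma ctrmxK m n (A : 'M[R[i]]_(m, n)) : ctrmx (ctrmx A) = A.
Proof. by apply/matrixP => i j; rewrite !ctrmxE conjcK. Qed.

Lemma ctrmx0 m n : ctrmx (0 : 'M[R[i]]_(m, n)) = 0.
Proof. by apply/matrixP => i j; rewrite ctrmxE !mxE conjc0. Qed.

Lemma ctrmxD m n (A B : 'M[R[i]]_(m, n)) : ctrmx (A + B) = ctrmx A + ctrmx B.
Proof. by rewrite /ctrmx map_mxD linearD. Qed.

Lemma ctrmxM m n p (A : 'M[R[i]]_(m, n)) (B : 'M[R[i]]_(n, p)) :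
  ctrmx (A *m B) = ctrmx B *m ctrmx A.
Proof. by rewrite /ctrmx map_mxM trmx_mul. Qed.

Lemma ctrmx_invmx n (A : 'M[R[i]]_n) : ctrmx (invmx A) = invmx (ctrmx A).
Proof. by rewrite /ctrmx map_invmx trmx_inv. Qed.

Lemma mxtrace_frob2 m n (A : 'M[R[i]]_(m, n)) : \tr (ctrmx A *m A) = (frob2 A)%:C.
Proof.
rewrite /mxtrace /frob2 exchange_big /= rmorph_sum; apply: eq_bigr => j _.
by rewrite mxE rmorph_sum; apply: eq_bigr => i _; rewrite ctrmxE mulJc.
Qed.

Lemma frob2_orthogonal_split n p (P : 'M[R[i]]_n) (J : 'M[R[i]]_(n, p)) :
  ctrmx P = P -> P *m P = P ->
  frob2 J = frob2 (P *m J) + frob2 (J - P *m J).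
Proof.
move=> herP idemP; apply: complexI; rewrite rmorphD /= -!mxtrace_frob2.
set A := P *m J; set B := J - A.
have AB0 : ctrmx A *m B = 0.
  by rewrite ctrmxM herP -mulmxA mulmxBr mulmxA idemP subrr mulmx0.
have BA0 : ctrmx B *m A = 0 by rewrite -[A]ctrmxK -ctrmxM AB0 ctrmx0.
have JAB : J = A + B by rewrite addrC subrK.
clearbody A B; rewrite JAB ctrmxD mulmxDl !mulmxDr AB0 BA0 addr0 add0r.
exact: mxtraceD.
Qed.

Lemma mul_ctrmx_unitmx m n (Q : 'M[R[i]]_(m, n)) :
  row_free Q -> Q *m ctrmx Q \in unitmx.
Proof.
move=> freeQ; rewrite -row_free_unit; apply/inj_row_free => v vQQ0.
apply/eqP; rewrite -(mulmx_free_eq0 _ freeQ); apply/eqP/frob2_eq0/complexI.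
by rewrite -mxtrace_frob2 mxtrace_mulC ctrmxM mulmxA -(mulmxA v) vQQ0 mul0mx mxtrace0.
Qed.

Lemma ctrmx_projQ m n (Q : 'M[R[i]]_(m, n)) : ctrmx (projQ Q) = projQ Q.
Proof. by rewrite /projQ !ctrmxM ctrmx_invmx ctrmxM ctrmxK mulmxA. Qed.

Lemma projQ_idem m n (Q : 'M[R[i]]_(m, n)) :
  row_free Q -> projQ Q *m projQ Q = projQ Q.
Proof.
move=> freeQ; rewrite /projQ -!mulmxA (mulmxA Q) (mulmxA (invmx _)).
by rewrite mulVmx ?mul_ctrmx_unitmx // mul1mx.
Qed.

Lemma frob2_projQ_le m n p (Q : 'M[R[i]]_(m, n)) (J : 'M[R[i]]_(n, p)) :
  row_free Q -> frob2 (projQ Q *m J) <= frob2 J.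
Proof.
move=> freeQ; rewrite [X in _ <= X](frob2_orthogonal_split J (ctrmx_projQ Q)).
  by rewrite lerDl frob2_ge0.
exact: projQ_idem.
Qed.

End Frobenius.

Section NaturalSums.
Variable R : comPzRingType.

Lemma sumr_nat n : 2 * \sum_(i < n) (i%:R : R) = n%:R * (n%:R - 1).
Proof.
elim: n => [|n IH]; first by rewrite big_ord0; ring.
by rewrite big_ord_recr /= mulrDr IH -addn1 natrD; ring.
Qed.

Lemma sumr_nat_sqr n :
  6 * \sum_(i < n) (i%:R : R) ^+ 2 = n%:R * (n%:R - 1) * (2 * n%:R - 1).
Proof.
elim: n => [|n IH]; first by rewrite big_ord0; ring.
by rewrite big_ord_recr /= mulrDr IH -addn1 natrD; ring.
Qed.

End NaturalSums.

Section AntennaIndices.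
Variable R : realType.

Lemma nantE N : (nant N)%:R = 2 * N%:R + 1 :> R.
Proof. by rewrite /nant natrD natrM. Qed.

Lemma aidx_rev N (i : 'I_(nant N)) : aidx R (rev_ord i) = - aidx R i.
Proof. by rewrite /aidx /= natrB ?ltn_ord // nantE -addn1 natrD; ring. Qed.

Lemma sum_aidx N : \sum_(i < nant N) aidx R i = 0.
Proof.
have S_opp : \sum_(i < nant N) aidx R i = - \sum_(i < nant N) aidx R i.
  by rewrite {1}(reindex_inj rev_ord_inj) -sumrN; apply: eq_bigr => i _; rewrite aidx_rev.
lra.
Qed.

Lemma sum_aidx_sqr N :
  \sum_(i < nant N) aidx R i ^+ 2 = N%:R * (N%:R + 1) * (2 * N%:R + 1) / 3.
Proof.
have sqrE (i : 'I_(nant N)) :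
    aidx R i ^+ 2 = (i%:R ^+ 2 - N%:R * i%:R) - N%:R * aidx R i.
  by rewrite /aidx; ring.
rewrite (eq_bigr _ (fun i _ => sqrE i)) !sumrB -!mulr_sumr sum_aidx mulr0 subr0.
have := sumr_nat R (nant N); have := sumr_nat_sqr R (nant N); rewrite nantE.
nra.
Qed.

End AntennaIndices.

Section Channel.
Variable R : realType.
Variables (lam : R) (Nbb Nmb : nat) (x y psi : R).

Lemma sqnormc_expj (t : R) : sqnormc (expj t) = 1.
Proof. by rewrite /sqnormc /= cos2Dsin2. Qed.

Lemma sqnormc_eta (r : R) : sqnormc (eta lam r) = (1 / r) ^+ 2 + (2 * pi / lam) ^+ 2.
Proof. by rewrite /sqnormc /eta /=; ring. Qed.

(* The MS-index terms [aidx j * spacing lam * cos psi * sin psi] of [Jx] and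
   [Jy] cancel in [Jpsi]. *)
Lemma Jpsi_entry i j :
  Jpsi lam Nbb Nmb x y psi i j =
  eta lam (rpol x y) * chanH lam Nbb Nmb x y psi i j *
  (aidx R j * spacing lam
   * (y * cos psi - x * sin psi - aidx R i * spacing lam * cos psi) / rpol x y)%:C.
Proof.
rewrite /Jpsi /Dmat !mul_mx_diag !mxE !(rmorphM, rmorphD, rmorphB, rmorphN) /=.
by rewrite !fmorphV /=; ring.
Qed.

Lemma frob2_Jpsi :
  frob2 (Jpsi lam Nbb Nmb x y psi) =
  sqnormc (eta lam (rpol x y)) * (lam / (4 * pi * rpol x y)) ^+ 2
    * (spacing lam / rpol x y) ^+ 2
  * (((nant Nbb)%:R * (y * cos psi - x * sin psi) ^+ 2
      + (spacing lam * cos psi) ^+ 2 * \sum_(i < nant Nbb) aidx R i ^+ 2)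
     * \sum_(j < nant Nmb) aidx R j ^+ 2).
Proof.
set K := sqnormc _ * _ * _; set W := y * cos psi - x * sin psi.
set e := spacing lam * cos psi.
transitivity (\sum_(i < nant Nbb) \sum_(j < nant Nmb)
    K * ((W - aidx R i * e) ^+ 2 * aidx R j ^+ 2)).
  apply: eq_bigr => i _; apply: eq_bigr => j _.
  rewrite -/(sqnormc _) Jpsi_entry mxE !sqnormcM !sqnormc_real sqnormc_expj /K /W /e.
  ring.
under eq_bigr do rewrite -!mulr_sumr.
rewrite -mulr_sumr -mulr_suml; congr (K * (_ * _)).
have sqrE (i : 'I_(nant Nbb)) :
    (W - aidx R i * e) ^+ 2 = W ^+ 2 - 2 * W * e * aidx R i + e ^+ 2 * aidx R i ^+ 2.
  by ring.
rewrite (eq_bigr _ (fun i _ => sqrE i)) big_split sumrB sumr_const card_ord.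
by rewrite -!mulr_sumr sum_aidx mulr0 subr0 mulr_natl.
Qed.

End Channel.

Lemma aperture_nant (R : realType) N (lam : R) : aperture N lam = N%:R * lam.
Proof. by rewrite /aperture /spacing nantE; field. Qed.

(* [(1 + A) (1 + B)] is the exact relative deviation from the leading term:
   [A] comes from the [1/r] part of [eta], [B] from the BS-index offsets. *)
Lemma frob2_Jpsi_polar (R : realType) (lam : R) Nbb Nmb (x y theta psi : R) :
  0 < lam -> (0 < Nmb)%N -> 0 < rpol x y ->
  x = rpol x y * cos theta -> y = rpol x y * sin theta ->
  sin (theta - psi) != 0 ->
  let r := rpol x y in let N : R := Nbb%:R in
  let Nb : R := (nant Nbb)%:R in let Nm : R := (nant Nmb)%:R in
  let s := sin (theta - psi) in
  frob2 (Jpsi lam Nbb Nmb x y psi) =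
  Nb * Nm * (aperture Nmb lam * `|s|) ^+ 2 / (48 * r ^+ 2) * (1 + 2 / (Nm - 1))
  * ((1 + lam ^+ 2 / (4 * pi ^+ 2 * r ^+ 2))
     * (1 + lam ^+ 2 * cos psi ^+ 2 * N * (N + 1) / (12 * r ^+ 2 * s ^+ 2))).
Proof.
move=> lam_gt0 Nmb_gt0 r_gt0 xE yE s_neq0 r N Nb Nm s.
have WE : y * cos psi - x * sin psi = r * s by rewrite /r /s {1}xE {1}yE sinB; ring.
have M_gt0 : 0 < Nmb%:R :> R by rewrite ltr0n.
have pi_neq0 : pi != 0 :> R by rewrite lt0r_neq0 // pi_gt0.
rewrite frob2_Jpsi WE !sum_aidx_sqr sqnormc_eta [(aperture _ _ * _) ^+ 2]exprMn real_normK ?num_real //.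
rewrite /Nb /Nm !nantE aperture_nant /spacing.
move: pi_neq0 s_neq0 r_gt0; rewrite /r /N /s.
generalize (pi : R) (sin (theta - psi)) (rpol x y) => p s' r' p_neq0 s'_neq0 r'_gt0.
by field; rewrite s'_neq0 p_neq0 !lt0r_neq0 //; lra.
Qed.

Lemma error_product_le (R : realFieldType) (a b k N : R) :
  0 <= a -> 0 <= b -> 1 <= N -> a * N <= 1 -> b * N <= k ->
  `|(1 + a) * (1 + b) - 1| <= 3 * (1 + 2 * k) / (2 * N + 1).
Proof.
move=> a_ge0 b_ge0 N_ge1 aN_le1 bN_lek.
rewrite ger0_norm; last by nra.
rewrite ler_pdivlMr; last by lra.
have a_le1 : a <= 1 by nra.
have abN_le : a * b * N <= b * N by nra.
nra.
Qed.

Lemma fresnel_sqr_lt (R : realType) (lam r : R) Nbb :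
  0 < lam -> fresnel lam (aperture Nbb lam) < r ->
  (62 / 100) ^+ 2 * (Nbb%:R ^+ 3 * lam ^+ 2) < r ^+ 2.
Proof.
move=> lam_gt0 fresnel_lt.
have fresnel_ge0 : 0 <= fresnel lam (aperture Nbb lam).
  by rewrite /fresnel mulr_ge0 ?sqrtr_ge0.
have fresnelE : fresnel lam (aperture Nbb lam) ^+ 2
    = (62 / 100) ^+ 2 * (Nbb%:R ^+ 3 * lam ^+ 2).
  rewrite /fresnel aperture_nant exprMn sqr_sqrtr; last first.
    by rewrite divr_ge0 ?exprn_ge0 ?mulr_ge0 //; lra.
  by congr (_ * _); field; rewrite lt0r_neq0.
by rewrite -fresnelE; apply: ltr_pM.
Qed.

Section NearFieldErrors.
Variables (R : realType) (lam r N : R).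

Lemma pathloss_error_ge0 : 0 <= lam ^+ 2 / (4 * pi ^+ 2 * r ^+ 2).
Proof.
exact: divr_ge0 (sqr_ge0 _) (mulr_ge0 (mulr_ge0 (ler0n _ 4) (sqr_ge0 _)) (sqr_ge0 _)).
Qed.

Lemma offset_error_ge0 (psi s : R) : 0 <= N ->
  0 <= lam ^+ 2 * cos psi ^+ 2 * N * (N + 1) / (12 * r ^+ 2 * s ^+ 2).
Proof.
move=> N_ge0; apply: divr_ge0.
  exact: mulr_ge0 (mulr_ge0 (mulr_ge0 (sqr_ge0 _) (sqr_ge0 _)) N_ge0) (addr_ge0 N_ge0 ler01).
exact: mulr_ge0 (mulr_ge0 (ler0n _ 12) (sqr_ge0 _)) (sqr_ge0 _).
Qed.

Lemma pathloss_error_le :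
  0 < lam -> 1 <= N -> (62 / 100) ^+ 2 * (N ^+ 3 * lam ^+ 2) < r ^+ 2 ->
  lam ^+ 2 / (4 * pi ^+ 2 * r ^+ 2) * N <= 1.
Proof.
move=> lam_gt0 N_ge1 near_field.
have pi2_ge4 : 4 <= pi ^+ 2 :> R by move: (@pi_ge2 R); generalize (pi : R) => p; nra.
have N_le_N3 : N <= N ^+ 3.
  have N2_ge1 : 1 <= N ^+ 2 by nra.
  by rewrite -[X in X <= _]mulr1 exprS ler_wpM2l //; lra.
rewrite mulrAC ler_pdivrMr; last by nra.
nra.
Qed.

Lemma offset_error_le (c s psi : R) :
  0 < lam -> 1 <= N -> (62 / 100) ^+ 2 * (N ^+ 3 * lam ^+ 2) < r ^+ 2 ->
  0 < c -> c <= `|s| ->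
  lam ^+ 2 * cos psi ^+ 2 * N * (N + 1) / (12 * r ^+ 2 * s ^+ 2) * N <= 1 / c ^+ 2.
Proof.
move=> lam_gt0 N_ge1 near_field c_gt0 c_le_s.
have c2_gt0 : 0 < c ^+ 2 by rewrite exprn_gt0.
have c2_le_s2 : c ^+ 2 <= s ^+ 2 by rewrite -(real_normK (num_real s)); nra.
have cos2_le1 : cos psi ^+ 2 <= 1 by have := cos2Dsin2 psi; nra.
have r2_gt0 : 0 < r ^+ 2.
  have : 0 <= N ^+ 3 * lam ^+ 2 by rewrite mulr_ge0 ?exprn_ge0 //; lra.
  nra.
have s2_gt0 : 0 < s ^+ 2 by lra.
rewrite mulrAC ler_pdivrMr; last by rewrite mulr_gt0 // mulr_gt0.
rewrite mul1r [_^-1 * _]mulrC ler_pdivlMr //.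
set P := lam ^+ 2 * N ^+ 2 * (N + 1).
have P_ge0 : 0 <= P by rewrite !mulr_ge0 ?exprn_ge0 //; lra.
have P_le : P <= 12 * r ^+ 2.
  have : P <= lam ^+ 2 * N ^+ 2 * (2 * N) by rewrite ler_wpM2l ?mulr_ge0 ?exprn_ge0 //; lra.
  have : lam ^+ 2 * N ^+ 2 * (2 * N) = 2 * (N ^+ 3 * lam ^+ 2) by ring.
  lra.
have -> : lam ^+ 2 * cos psi ^+ 2 * N * (N + 1) * N * c ^+ 2
    = P * (cos psi ^+ 2 * c ^+ 2) by rewrite /P; ring.
apply: (le_trans (y := P * s ^+ 2)); first by rewrite ler_wpM2l //; nra.
by rewrite ler_wpM2r ?sqr_ge0.
Qed.

End NearFieldErrors.

Theorem proposition4 (R : realType) (c : R) (hc : 0 < c) :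
  exists C : R, forall (lam : R) (Nbb Nmb : nat) (x y theta psi : R),
    0 < lam -> (1 <= Nbb)%N -> (1 <= Nmb)%N ->
    0 < rpol x y ->
    x = rpol x y * cos theta -> y = rpol x y * sin theta ->
    aperture Nmb lam < aperture Nbb lam ->
    fresnel lam (aperture Nbb lam) < rpol x y ->
    c <= `|sin (theta - psi)| ->
    let r := rpol x y in
    let Nb : R := (nant Nbb)%:R in
    let Nm : R := (nant Nmb)%:R in
    let Deff := aperture Nmb lam * `|sin (theta - psi)| in
    exists eps : R,
      `|eps| <= C / Nb /\
      frob2 (Jpsi lam Nbb Nmb x y psi)
        = Nb * Nm * Deff ^+ 2 / (48 * r ^+ 2) * (1 + 2 / (Nm - 1)) * (1 + eps) /\
      (forall (Nrf : nat) (Q : 'M[R[i]]_(Nrf, nant Nbb)) (Pm s2 : R),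
         row_free Q -> 0 < Pm -> 0 < s2 ->
         Fbar Pm s2 Q (Jpsi lam Nbb Nmb x y psi)
           <= 2 * Pm / (s2 * Nm) * frob2 (Jpsi lam Nbb Nmb x y psi) /\
         2 * Pm / (s2 * Nm) * frob2 (Jpsi lam Nbb Nmb x y psi)
           = Pm * Nb * Deff ^+ 2 / (24 * s2 * r ^+ 2) * (1 + 2 / (Nm - 1)) * (1 + eps)).
Proof.
exists (3 * (1 + 2 / c ^+ 2)).
move=> lam Nbb Nmb x y theta psi lam_gt0 Nbb_ge1 Nmb_ge1 r_gt0 xE yE _ fresnel_lt c_le_s.
move=> r Nb Nm Deff.
have s_neq0 : sin (theta - psi) != 0 by rewrite -normr_gt0; lra.
have N_ge1 : 1 <= Nbb%:R :> R by rewrite ler1n.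
have M_ge1 : 1 <= Nmb%:R :> R by rewrite ler1n.
have near_field := fresnel_sqr_lt lam_gt0 fresnel_lt.
have /= frobE := frob2_Jpsi_polar Nbb lam_gt0 Nmb_ge1 r_gt0 xE yE s_neq0.
set A := lam ^+ 2 / _ in frobE; set B := lam ^+ 2 * cos psi ^+ 2 * _ * _ / _ in frobE.
have Nm_gt0 : 0 < Nm by rewrite ltr0n /nant addn1.
exists ((1 + A) * (1 + B) - 1); rewrite subrKC; split; last split.
- have := error_product_le (pathloss_error_ge0 lam r) (offset_error_ge0 lam r psi _ (ler0n R Nbb)) N_ge1
    (pathloss_error_le lam_gt0 N_ge1 near_field)
    (offset_error_le psi lam_gt0 N_ge1 near_field hc c_le_s).
  by rewrite /Nb nantE mul1r.
- by rewrite frobE mulrA.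
- move=> Nrf Q Pm s2 freeQ Pm_gt0 s2_gt0; split.
    by rewrite /Fbar ler_wpM2l ?frob2_projQ_le ?divr_ge0 ?mulr_ge0 //; lra.
  rewrite frobE /Deff /r; field.
  by rewrite nantE !lt0r_neq0 //; lra.
Qed.
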